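(* Let $d\ge2$ and let $\omega$ be any configuration of faces. For each finite open cluster $C^*$ of the dual bond configuration there is a unique hole $D$ of $K(\omega)$ with $D\cap(\mathbb{Z}^d)^*$ equal to the vertex set of $C^*$, and the map $C^*\mapsto D$ is a bijection between the finite open dual clusters and the holes. Moreover, under this bijection two holes $D,D'$ are adjacent if and only if the corresponding finite clusters $C^*,(C^* )'$ satisfy $\Delta C^*\cap\Delta (C^* )'\neq\emptyset$.
   Context: A face is a $(d-1)$-dimensional elementary cube in $\mathbb{R}^d$ (a product of intervals $[l,l]$ or $[l,l+1]$, $l\in\mathbb{Z}$, with exactly one degenerate factor). A configuration $\omega$ declares each face open or closed; $K(\omega)$ is the union of open faces. A hole is a bounded connected component of $\mathbb{R}^d\setminus K(\omega)$; two holes are adjacent iff some face is contained in the boundary of both. Dual lattice: vertices $(\mathbb{Z}^d)^*=\mathbb{Z}^d+(1/2,\dots,1/2)$, dual bonds $\langle x^*,y^*\rangle$ with $\|x^*-y^*\|_1=1$. Each dual bond $e^*$ meets exactly one face $Q_{e^*}$ (namely $Q_{e^*}=B_{x^*}\cap B_{y^*}$ where $B_{z^*}=\prod_i[(z^* )_i-1/2,(z^* )_i+1/2]$); the dual bond $e^*$ is declared open iff $Q_{e^*}$ is closed. An open dual cluster is a connected component (possibly a single vertex) of the graph on $(\mathbb{Z}^d)^*$ formed by open dual bonds. For a cluster $C^*$, $\Delta C^*$ is the set of dual bonds with exactly one endpoint in $C^*$. *)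

From HB Require Import structures.
From mathcomp Require Import all_boot all_order all_algebra.
From mathcomp Require Import all_classical all_reals all_analysis.
From Stdlib Require Import Relations.
Unset Printing Implicit Defensive.
Import Order.TTheory GRing.Theory Num.Theory.
Import numFieldNormedType.Exports.
Local Open Scope classical_set_scope.
Local Open Scope ring_scope.

(* A face is encoded by (l, j): the (d-1)-dimensional elementary cube
   prod_i I_i with I_j = [l_j, l_j] and I_i = [l_i, l_i + 1] for i <> j. *)
Definition face (d : nat) : Type := ('rV[int]_d * 'I_d)%type.

Definition face_set (R : realType) (d : nat) (f : face d) : set 'rV[R]_d :=
  [set x | forall i : 'I_d,
     if i == f.2 then x ord0 i = (f.1 ord0 i)%:~R
     else ((f.1 ord0 i)%:~R <= x ord0 i <= (f.1 ord0 i)%:~R + 1)].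

(* A configuration declares each face open (true) or closed (false). *)
Definition config (d : nat) : Type := face d -> bool.

Definition Kset (R : realType) (d : nat) (omega : config d) : set 'rV[R]_d :=
  \bigcup_(f in [set f | omega f]) face_set R d f.

Definition hole (R : realType) (d : nat) (omega : config d) (D : set 'rV[R]_d) : Prop :=
  (exists x, (~` Kset R d omega) x /\ D = connected_component (~` Kset R d omega) x)
  /\ bounded_set D.

Definition boundary (R : realType) (d : nat) (A : set 'rV[R]_d) : set 'rV[R]_d :=
  closure A `\` interior A.

Definition adjacent_holes (R : realType) (d : nat) (D D' : set 'rV[R]_d) : Prop :=
  exists f : face d, face_set R d f `<=` boundary R d D /\ face_set R d f `<=` boundary R d D'.

(* Dual lattice: z : 'rV[int]_d encodes the dual vertex z + (1/2,...,1/2). *)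
Definition dual_pt (R : realType) (d : nat) (z : 'rV[int]_d) : 'rV[R]_d :=
  \row_i ((z ord0 i)%:~R + 2^-1).

Definition dual_lattice (R : realType) (d : nat) : set 'rV[R]_d :=
  [set p | exists z, p = dual_pt R d z].

(* B_{z*} = prod_i [z*_i - 1/2, z*_i + 1/2] = prod_i [z_i, z_i + 1]. *)
Definition Bbox (R : realType) (d : nat) (z : 'rV[int]_d) : set 'rV[R]_d :=
  [set x | forall i : 'I_d, (z ord0 i)%:~R <= x ord0 i <= (z ord0 i)%:~R + 1].

Definition dual_adj (d : nat) (x y : 'rV[int]_d) : Prop :=
  (\sum_(i < d) `|x ord0 i - y ord0 i|)%R = 1.

Definition dual_bond (d : nat) (e : set 'rV[int]_d) : Prop :=
  exists x y, dual_adj d x y /\ e = [set x; y].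

Definition open_dual_adj (R : realType) (d : nat) (omega : config d)
    (x y : 'rV[int]_d) : Prop :=
  dual_adj d x y /\
  exists f : face d, face_set R d f = Bbox R d x `&` Bbox R d y /\ omega f = false.

Definition open_cluster (R : realType) (d : nat) (omega : config d)
    (C : set 'rV[int]_d) : Prop :=
  exists x, C = [set y | clos_refl_trans _ (open_dual_adj R d omega) x y].

Definition finite_open_cluster (R : realType) (d : nat) (omega : config d)
    (C : set 'rV[int]_d) : Prop :=
  open_cluster R d omega C /\ finite_set C.

Definition edge_boundary (d : nat) (C : set 'rV[int]_d) : set (set 'rV[int]_d) :=
  [set e | dual_bond d e /\
     exists x y, e = [set x; y] /\ x <> y /\ C x /\ ~ C y].

From HB Require Import structures.
From mathcomp Require Import all_boot all_order all_algebra.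
From mathcomp Require Import all_classical all_reals all_analysis.
From mathcomp Require Import lra zify.
From Stdlib Require Import Relations.
Import Order.TTheory GRing.Theory Num.Theory.
Import numFieldNormedType.Exports.
Local Open Scope classical_set_scope.
Local Open Scope ring_scope.

(* A point p outside K lies in some closed unit box B_w, and the segment from p
   to the dual vertex w* avoids K.  Two boxes containing the
   same p outside K are joined by open dual bonds (change one coordinate at a time:
   each face crossed contains p, hence is closed), and an open dual bond is crossed
   through the centre of its closed face.  So the component of R^d \ K containing z*
   is the union of the boxes of the cluster of z, minus K; it is relatively clopen
   because boxes and faces form a locally finite family of closed sets.  Its dual
   vertices are exactly the cluster, and it is bounded iff the cluster is finite.
   Finally, an open face between a cluster and its complement lies in the boundary
   of the corresponding hole, while the centre of a face in the boundary of a hole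
   is approached from one of the two boxes adjacent to that face, which therefore
   belongs to the cluster. *)

Section IntegerGrid.
Context {R : realType}.
Implicit Types (p q : R) (z l : int).

Lemma no_intr_between z l : ~ ((z%:~R : R) < l%:~R < (z%:~R : R) + 1).
Proof.
move=> /andP[h1 h2].
have : z < l by rewrite -(ltr_int R).
have : l < z + 1 by rewrite -(ltr_int R) intrD.
lia.
Qed.

Lemma intr_eq_of_lt1 z l : `|(z%:~R : R) - l%:~R| < 1 -> z = l.
Proof.
rewrite ltr_norml => /andP[h1 h2].
have : z < l + 1 by rewrite -(ltr_int R) intrD; lra.
have : l < z + 1 by rewrite -(ltr_int R) intrD; lra.
lia.
Qed.

Lemma half_neq_intr z l : (z%:~R + 2^-1 : R) != l%:~R.
Proof.
apply/eqP => h; apply: (no_intr_between z l); rewrite -h -div1r.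
apply/andP; split; lra.
Qed.

Lemma ints_isolated p :
  exists2 e : R, 0 < e & forall l, `|l%:~R - p| < e -> p = l%:~R.
Proof.
have lo := Num.Theory.floor_le p.
have hi : p < (Num.floor p)%:~R + 1 by rewrite -intrD1 Num.Theory.floorD1_gt.
have [pn|pn] := eqVneq p (Num.floor p)%:~R.
  exists 1 => [|l]; first exact: ltr01.
  by rewrite pn => /intr_eq_of_lt1 ->.
have {}lo : (Num.floor p)%:~R < p by rewrite lt_neqAle eq_sym pn lo.
exists (Num.min (p - (Num.floor p)%:~R) ((Num.floor p)%:~R + 1 - p)).
  by rewrite lt_min !subr_gt0 lo hi.
move=> l; rewrite lt_min !ltr_norml => /andP[/andP[h1 h2] /andP[h3 h4]].
exfalso; have [le_ln|lt_nl] := lerP l (Num.floor p).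
  by move: le_ln; rewrite -(ler_int R); lra.
by move: lt_nl; rewrite -lezD1 -(ler_int R) intrD; lra.
Qed.

Definition int_cells_sub q p := forall l,
  ((l%:~R <= q <= l%:~R + 1) -> (l%:~R <= p <= l%:~R + 1)) /\ (q = l%:~R -> p = l%:~R).

Lemma near_int_cells_sub p : \forall q \near p, int_cells_sub q p.
Proof.
have [e e0 isolated] := ints_isolated p.
apply/nbhs_ballP; exists e => // q; rewrite -ball_normE /= => /[dup] pq.
rewrite ltr_norml => /andP[pq1 pq2] l; split => [/andP[lq ql]|ql].
  apply/andP; split; rewrite leNgt; apply/negP => lt_p.
    have := isolated l; rewrite ltr_norml; lra.
  have := isolated (l + 1); rewrite intrD ltr_norml; lra.
by apply: isolated; rewrite -ql distrC.
Qed.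

End IntegerGrid.

Section RowNorm.
Context {K : realDomainType} {d : nat}.
Implicit Types (v : 'rV[K]_d) (M : K).

Lemma coord_le_mx_norm v i : `|v ord0 i| <= `|v|.
Proof. by rewrite [leRHS]mx_normrE; apply/bigmax_geP; right; exists (ord0, i). Qed.

Lemma mx_norm_le_coords v M : 0 <= M -> (forall i, `|v ord0 i| <= M) -> `|v| <= M.
Proof.
move=> M0 le_vM; rewrite [leLHS]mx_normrE; apply/bigmax_leP; split => // -[a b] _.
by rewrite (ord1 a).
Qed.

End RowNorm.

Lemma near_int_cells_sub_row {R : realType} {d : nat} (p : 'rV[R]_d) :
  nbhs p (fun q : 'rV[R]_d => forall i, int_cells_sub (q ord0 i) (p ord0 i)).
Proof.
apply: (@filter_forall _ _ (fun i q => int_cells_sub (q ord0 i) (p ord0 i)) (nbhs p) _) => i.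
exact: (@coord_continuous _ _ _ ord0 i p) _ (near_int_cells_sub _).
Qed.

Lemma finite_int_box (d : nat) (N : int) :
  finite_set [set y : 'rV[int]_d | forall i, `|y ord0 i| <= N].
Proof.
pose n := `|N|%N.
pose shift (v : 'rV['I_(n + n).+1]_d) := \row_i ((v ord0 i)%:Z - n%:Z) : 'rV[int]_d.
apply: (@sub_finite_set _ _ (shift @` setT)); last exact/finite_image/finite_finset.
move=> y yN; exists (\row_i inord (absz (y ord0 i + n%:Z))) => //.
apply/rowP => i; rewrite !mxE.
have := yN i; rewrite ler_norml => /andP[lo hi].
have nN : n%:Z = N by rewrite gez0_abs // (le_trans (normr_ge0 _) (yN i)).
have yn0 : 0 <= y ord0 i + n%:Z by rewrite nN; lia.
have yn : (absz (y ord0 i + n%:Z))%:Z = y ord0 i + n%:Z by rewrite gez0_abs.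
by rewrite inordK ?yn ?addrK // -ltz_nat yn; lia.
Qed.

Lemma set2_eq {T : Type} {x y x' y' : T} : [set x; y] = [set x'; y'] -> x <> y ->
  (x' = x /\ y' = y) \/ (x' = y /\ y' = x).
Proof.
move=> e xy.
have [x'_xy y'_xy] : [set x; y] x' /\ [set x; y] y' by rewrite e; split; [left|right].
have [x_x'y' y_x'y'] : [set x'; y'] x /\ [set x'; y'] y by rewrite -e; split; [left|right].
case: x'_xy y'_xy x_x'y' y_x'y' => -> [] -> x_ y_; [|by left|by right|]; exfalso.
- by case: y_ => /esym.
- by case: x_.
Qed.

Lemma inj_image_eq {T U : Type} {f : T -> U} {A B : set T} : injective f ->
  f @` A = f @` B -> A = B.
Proof. by move=> f_inj AB; apply/funext => a; rewrite -(image_inj f_inj) AB image_inj. Qed.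

Section Cells.
Variables (R : realType) (d : nat) (omega : config d).
Local Notation K := (Kset R d omega).
Local Notation box := (Bbox R d).
Local Notation face_pts := (face_set R d).
Local Notation dual := (dual_pt R d).
Local Notation linked := (clos_refl_trans _ (open_dual_adj R d omega)).
Implicit Types (a b c w x y z : 'rV[int]_d) (p q : 'rV[R]_d) (f : face d).

Lemma open_box_notK {z p} :
  (forall i, (z ord0 i)%:~R < p ord0 i < (z ord0 i)%:~R + 1) -> ~ K p.
Proof.
move=> zp [f _ /(_ f.2)]; rewrite eqxx => pf.
by apply: (@no_intr_between R (z ord0 f.2) (f.1 ord0 f.2)); rewrite -pf.
Qed.

Lemma dual_ptE z i : dual z ord0 i = (z ord0 i)%:~R + 2^-1.
Proof. by rewrite mxE. Qed.

Lemma dual_pt_open z i : (z ord0 i)%:~R < dual z ord0 i < (z ord0 i)%:~R + 1.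
Proof. by rewrite dual_ptE -div1r; apply/andP; split; lra. Qed.

Lemma dual_pt_notK z : ~ K (dual z).
Proof. exact/open_box_notK/dual_pt_open. Qed.

Lemma box_dual_pt z : box z (dual z).
Proof. by move=> i; have /andP[? ?] := dual_pt_open z i; apply/andP; split; lra. Qed.

Lemma box_dual_pt_eq {w z} : box w (dual z) -> w = z.
Proof.
move=> wz; apply/rowP => i; apply: (@intr_eq_of_lt1 R).
by have := wz i; rewrite dual_ptE -div1r ltr_norml => /andP[? ?]; apply/andP; split; lra.
Qed.

Lemma dual_pt_inj : injective dual.
Proof. by move=> a b ab; apply: box_dual_pt_eq; rewrite -ab; exact: box_dual_pt. Qed.

Lemma box_floor p : box (\row_i Num.floor (p ord0 i)) p.
Proof.
move=> i; rewrite mxE Num.Theory.floor_le /=.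
by rewrite -intrD1 ltW // Num.Theory.floorD1_gt.
Qed.

Lemma segment_to_dual_pt_open {z q t} : box z q -> 0 < t <= 1 -> forall i,
  (z ord0 i)%:~R < (q + t *: (dual z - q)) ord0 i < (z ord0 i)%:~R + 1.
Proof.
move=> zq /andP[t0 t1] i; rewrite !mxE -div1r.
have /andP[lo hi] := zq i.
have : 0 <= (1 - t) * (q ord0 i - (z ord0 i)%:~R) by apply: mulr_ge0; lra.
have : 0 <= (1 - t) * ((z ord0 i)%:~R + 1 - q ord0 i) by apply: mulr_ge0; lra.
move=> ? ?; apply/andP; split; nra.
Qed.

Lemma near_cells_sub p : \forall q \near p,
  (forall w, box w q -> box w p) /\ (forall f, face_pts f q -> face_pts f p).
Proof.
apply: (filterS _ (near_int_cells_sub_row p)) => q qp; split => [w wq i|f fq i].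
  exact: (qp i (w ord0 i)).1 (wq i).
by have := fq i; case: ifP => _ => [/(qp i _).2|/(qp i _).1].
Qed.

Definition unit_step (j : 'I_d) c c' : Prop :=
  (forall i, i != j -> c' ord0 i = c ord0 i) /\ c' ord0 j = c ord0 j + 1.

Definition upper_face c (j : 'I_d) : face d :=
  (\row_i (if i == j then c ord0 j + 1 else c ord0 i), j).

Lemma unit_step_face {j c c'} :
  unit_step j c c' -> face_pts (upper_face c j) = box c `&` box c'.
Proof.
move=> [cc' cj]; apply/seteqP; split => [p pf|p [pc pc'] i].
  split => i; have := pf i; rewrite /upper_face /= mxE;
  have [->|ij] := eqVneq i j; rewrite ?eqxx ?(negbTE ij) //.
  - by move=> ->; rewrite intrD; apply/andP; split; lra.
  - by move=> ->; rewrite cj intrD; apply/andP; split; lra.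
  - by rewrite cc'.
rewrite /upper_face /= mxE; have [->|ij] := eqVneq i j; last exact: pc.
have /andP[? ?] := pc j; have := pc' j; rewrite cj intrD => /andP[? ?]; lra.
Qed.

Lemma unit_step_adj {j c c'} : unit_step j c c' -> dual_adj d c c'.
Proof.
move=> [cc' cj]; rewrite /dual_adj (bigD1 j) //= big1 => [|i ij].
  by rewrite cj addr0 opprD addrA subrr sub0r normrN normr1.
by rewrite cc' // subrr normr0.
Qed.

Lemma dual_adj_unit_step {a b} : dual_adj d a b ->
  exists j, unit_step j a b \/ unit_step j b a.
Proof.
move=> ab; have [j aj] : exists j, a ord0 j != b ord0 j.
  apply: contrapT => /forallNP eq_ab; move: ab; rewrite /dual_adj big1 // => i _.
  by move/negP/negPn/eqP: (eq_ab i) => ->; rewrite subrr normr0.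
move: ab; rewrite /dual_adj (bigD1 j) //=.
have rest : \sum_(i | i != j) `|a ord0 i - b ord0 i| >= 0 by rewrite sumr_ge0.
have aj0 : 0 < `|a ord0 j - b ord0 j| by rewrite normr_gt0 subr_eq0.
move=> sum1; have rest0 : \sum_(i | i != j) `|a ord0 i - b ord0 i| = 0.
  apply/eqP; rewrite eq_le rest andbT -(lerD2l `|a ord0 j - b ord0 j|) addr0 sum1.
  by rewrite -gtz0_ge1.
have eq_ab i : i != j -> b ord0 i = a ord0 i.
  move=> ij; move/eqP: rest0; rewrite psumr_eq0 // => /allP /(_ i).
  rewrite mem_index_enum ij => /(_ isT) /implyP /(_ isT).
  by rewrite normr_eq0 subr_eq0 => /eqP.
rewrite rest0 addr0 in sum1; exists j.
have [le_ab|lt_ba] := lerP (a ord0 j - b ord0 j) 0.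
  by rewrite ler0_norm // in sum1; left; split => //; lia.
by rewrite gtr0_norm // in sum1; right; split => [i /eq_ab|]; lia.
Qed.

Lemma dual_adj_face {a b} : dual_adj d a b -> exists f, face_pts f = box a `&` box b.
Proof.
case/dual_adj_unit_step => j [ab|ba].
  by exists (upper_face a j); exact: unit_step_face.
by exists (upper_face b j); rewrite setIC; exact: unit_step_face.
Qed.

Lemma dual_adj_sym {a b} : dual_adj d a b -> dual_adj d b a.
Proof. by rewrite /dual_adj => <-; apply: eq_bigr => i _; exact: distrC. Qed.

Lemma dual_adj_neq {a b} : dual_adj d a b -> a <> b.
Proof. by move=> + ab; rewrite ab /dual_adj big1 // => i _; rewrite subrr normr0. Qed.

Lemma open_dual_adj_sym {a b} :
  open_dual_adj R d omega a b -> open_dual_adj R d omega b a.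
Proof. by case=> /dual_adj_sym ab [f [? ?]]; split=> //; exists f; rewrite setIC. Qed.

Lemma linked_sym {a b} : linked a b -> linked b a.
Proof.
elim=> [x y /open_dual_adj_sym xy|x|x y w _ xy _ yw]; first exact: rt_step.
  exact: rt_refl.
exact: rt_trans yw xy.
Qed.

Lemma unit_step_open {p j c c'} : ~ K p -> box c p -> box c' p ->
  unit_step j c c' -> open_dual_adj R d omega c c'.
Proof.
move=> nKp cp c'p cc'; split; first exact: unit_step_adj cc'.
exists (upper_face c j); split; first exact: unit_step_face.
apply/negP => open_f; apply: nKp; exists (upper_face c j) => //.
by rewrite (unit_step_face cc').
Qed.

Lemma boxes_linked_at {p j a b} : ~ K p -> box a p -> box b p ->
  (forall i, i != j -> b ord0 i = a ord0 i) -> linked a b.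
Proof.
move=> nKp ap bp ab_off; have /andP[? ?] := ap j; have /andP[? ?] := bp j.
have : a ord0 j <= b ord0 j + 1 by rewrite -(ler_int R) intrD; lra.
have : b ord0 j <= a ord0 j + 1 by rewrite -(ler_int R) intrD; lra.
move=> ba ab; have [eq_ab|[up|down]] : b ord0 j = a ord0 j \/
    b ord0 j = a ord0 j + 1 \/ a ord0 j = b ord0 j + 1 by lia.
- suff -> : b = a by exact: rt_refl.
  by apply/rowP => i; have [->|/ab_off] := eqVneq i j.
- exact/rt_step/(unit_step_open nKp ap bp (conj ab_off up)).
- apply/linked_sym/rt_step/(unit_step_open nKp bp ap (j := j)).
  by split => // i /ab_off ->.
Qed.

(* Change the coordinates of [a] into those of [b] one at a time: every
   intermediate box still contains [p]. *)
Lemma boxes_linked {p a b} : ~ K p -> box a p -> box b p -> linked a b.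
Proof.
move=> nKp ap bp.
pose r k := \row_i (if (i < k)%N then b ord0 i else a ord0 i) : 'rV[int]_d.
have rp k : box (r k) p by move=> i; rewrite mxE; case: ifP.
have r_step k : (k < d)%N -> linked (r k) (r k.+1).
  move=> kd; apply: (boxes_linked_at (j := Ordinal kd) nKp (rp k) (rp k.+1)) => i ij.
  by have ik : (i : nat) != k := ij; rewrite !mxE ltnS leq_eqVlt (negbTE ik).
have r_d : r d = b by apply/rowP => i; rewrite mxE ltn_ord.
suff /(_ d (leqnn d)) : forall k, (k <= d)%N -> linked a (r k) by rewrite r_d.
elim=> [_|k IH kd]; last exact: rt_trans (IH (ltnW kd)) (r_step k kd).
have -> : r 0%N = a by apply/rowP => i; rewrite mxE.
exact: rt_refl.
Qed.

Definition cluster z := [set y | linked z y].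

Definition region z := [set p | ~ K p /\ exists2 w, box w p & linked z w].

Lemma region_separated z : separated (region z) (~` K `\` region z).
Proof.
split; apply/seteqP; split => // p.
  move=> [cl_p [nKp not_zp]]; apply: not_zp; split => //.
  have [q [[_ [w wq zw]] [qp _]]] := cl_p _ (near_cells_sub p).
  by exists w => //; exact: qp.
move=> [[nKp [w wp zw]] cl_p].
have [q [[nKq not_zq] [qp _]]] := cl_p _ (near_cells_sub p).
apply: not_zq; split => //; exists (\row_i Num.floor (q ord0 i)); first exact: box_floor.
exact: rt_trans zw (boxes_linked nKp wp (qp _ (box_floor q))).
Qed.

Lemma component_sub_region {z p} : ~ K p -> box z p ->
  connected_component (~` K) p `<=` region z.
Proof.
move=> nKp zp.
have cover : connected_component (~` K) p `<=` region z `|` (~` K `\` region z).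
  move=> q /connected_component_sub nKq.
  by have [zq|not_zq] := pselect (region z q); [left|right].
have [//|rest] := connected_subset (region_separated z) cover
  (@component_connected _ (~` K) p).
have [_ not_zp] := rest p (connected_component_refl nKp).
by case: not_zp; split => //; exists z => //; exact: rt_refl.
Qed.

Lemma segment_in_component {z q} : ~ K q -> box z q ->
  connected_component (~` K) q (dual z).
Proof.
move=> nKq zq; pose g t : 'rV[R]_d := q + t *: (dual z - q).
have g_cont : {within `[0, 1], continuous g}.
  apply: continuous_subspaceT => t.
  have cst_q : {for t, continuous (fun=> q)} by exact: cst_continuous.
  have lin : {for t, continuous (fun s : R => s *: (dual z - q))}.
    by apply: continuousZr_tmp; exact: cvg_id.
  exact: continuousD cst_q lin.
have seg_conn := connected_continuous_connected (@segment_connected R 0 1) g_cont.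
have seg_q : (g @` `[0, 1]) q.
  by exists 0; [rewrite /= in_itv /= lexx ler01|rewrite /g scale0r addr0].
have seg_z : (g @` `[0, 1]) (dual z).
  by exists 1; [rewrite /= in_itv /= lexx ler01|rewrite /g scale1r addrC subrK].
apply: (connected_component_max seg_q _ seg_conn) seg_z.
move=> _ [t + <-]; rewrite /= in_itv /= => /andP[t0 t1].
have [->|t_neq0] := eqVneq t 0; first by rewrite /g scale0r addr0.
apply: (open_box_notK (z := z)); apply: segment_to_dual_pt_open => //.
by rewrite t1 andbT lt_neqAle eq_sym t_neq0.
Qed.

Definition face_center f : 'rV[R]_d :=
  \row_i (if i == f.2 then (f.1 ord0 i)%:~R else (f.1 ord0 i)%:~R + 2^-1).

Lemma face_center_in f : face_pts f (face_center f).
Proof.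
move=> i; rewrite mxE; case: (i == f.2) => //.
by rewrite -div1r; apply/andP; split; lra.
Qed.

Lemma face_center_uniq f g : face_pts g (face_center f) -> g = f.
Proof.
move=> gf; have g2 : g.2 = f.2.
  apply/eqP/negPn/negP => g2f2; have := gf g.2.
  by rewrite eqxx mxE (negbTE g2f2); apply/eqP; exact: half_neq_intr.
have g1 : g.1 = f.1.
  apply/rowP => i; have := gf i; rewrite mxE g2.
  case: (i == f.2); first by move/intr_inj/esym.
  rewrite -div1r => /andP[lo hi]; apply: (@intr_eq_of_lt1 R).
  by rewrite ltr_norml; apply/andP; split; lra.
by case: f g gf g1 g2 => [l j] [l' j'] /= _ -> ->.
Qed.

Lemma face_center_notK f : omega f = false -> ~ K (face_center f).
Proof. by move=> closed_f [g + /face_center_uniq gf]; rewrite gf /= closed_f. Qed.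

Lemma open_dual_adj_component {a b} : open_dual_adj R d omega a b ->
  connected_component (~` K) (dual a) (dual b).
Proof.
move=> [_ [f [f_ab /face_center_notK nKc]]].
have [ac bc] : box a (face_center f) /\ box b (face_center f).
  by have := face_center_in f; rewrite f_ab.
exact: connected_component_trans
  (connected_component_sym (segment_in_component nKc ac)) (segment_in_component nKc bc).
Qed.

Lemma linked_component {a b} : linked a b ->
  connected_component (~` K) (dual a) (dual b).
Proof.
elim=> [x y /open_dual_adj_component //|x|x y w _ xy _ yw].
  exact: connected_component_refl (dual_pt_notK x).
exact: connected_component_trans xy yw.
Qed.

Lemma component_dual_pt z : connected_component (~` K) (dual z) = region z.
Proof.
apply/seteqP; split; first exact: component_sub_region (dual_pt_notK z) (box_dual_pt z).
move=> q [nKq [w wq zw]].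
exact: connected_component_trans
  (linked_component zw) (connected_component_sym (segment_in_component nKq wq)).
Qed.

Lemma component_region {p z} : ~ K p -> box z p ->
  connected_component (~` K) p = region z.
Proof.
move=> nKp zp; rewrite -component_dual_pt; apply: same_connected_component.
exact: segment_in_component.
Qed.

Lemma region_linked {a b} : linked a b -> region a = region b.
Proof.
by move=> ab; rewrite -!component_dual_pt; apply/same_connected_component/linked_component.
Qed.

Lemma hole_region D : hole R d omega D -> exists z, D = region z.
Proof.
move=> [[p [nKp ->]] _]; exists (\row_i Num.floor (p ord0 i)).
exact: component_region (box_floor p).
Qed.

Lemma region_dual_lattice z : region z `&` dual_lattice R d = dual @` cluster z.
Proof.
apply/seteqP; split => [p [[_ [w wp zw]] [y py]]|_ [y zy <-]].
  by subst p; exists y; rewrite // -(box_dual_pt_eq wp).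
by split; [split; [exact: dual_pt_notK|exists y => //; exact: box_dual_pt]|exists y].
Qed.

Lemma region_bounded z : finite_set (cluster z) -> bounded_set (region z).
Proof.
move=> /(finite_image dual) /finite_compact /compact_bounded [M [_ bdM]].
exists (M + 1); split => [|N MN p [_ [w wp zw]]]; first exact: num_real.
have /bdM bdN : M < N - 1 by lra.
have wN : `|dual w| <= N - 1 by apply: bdN; exists w.
have pw : `|p - dual w| <= 1.
  apply: mx_norm_le_coords => // i; rewrite !mxE -div1r.
  by have /andP[? ?] := wp i; rewrite ler_norml; apply/andP; split; lra.
by have := ler_normD (dual w) (p - dual w); rewrite [dual w + _]addrC subrK /=; lra.
Qed.

Lemma region_finite z : bounded_set (region z) -> finite_set (cluster z).
Proof.
move=> [M [_ bdM]].
have {bdM} bdM : globally (region z) [set p | `|p| <= M + 1] by apply: bdM; rewrite ltrDl.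
apply: sub_finite_set (finite_int_box d (Num.floor (M + 2))) => y zy i.
have /bdM : region z (dual y).
  by split; [exact: dual_pt_notK|exists y => //; exact: box_dual_pt].
move/(le_trans (coord_le_mx_norm _ i)); rewrite dual_ptE -div1r ler_norml => /andP[lo hi].
rewrite ler_norml lerNl !Num.Theory.floor_ge_int intrN.
by apply/andP; split; lra.
Qed.

Lemma cluster_linked {a b} : linked a b -> cluster a = cluster b.
Proof.
move=> ab; apply/seteqP; split => c ac.
  exact: rt_trans (linked_sym ab) ac.
exact: rt_trans ab ac.
Qed.

Lemma region_lattice_cluster z (C : set 'rV[int]_d) :
  region z `&` dual_lattice R d = dual @` C -> C = cluster z.
Proof. by rewrite region_dual_lattice => /(inj_image_eq dual_pt_inj). Qed.

(* A finite cluster cannot contain the whole ray from [z] in a coordinate direction. *)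
Lemma finite_cluster_exit {z} : (0 < d)%N -> finite_set (cluster z) ->
  exists x y, [/\ linked z x, ~ linked z y & dual_adj d x y].
Proof.
move=> d_gt0 fin_z; apply: contrapT => no_exit.
have closed_z x y : linked z x -> dual_adj d x y -> linked z y.
  by move=> zx xy; apply: contrapT => zy; apply: no_exit; exists x, y.
pose j := Ordinal d_gt0.
pose ray (n : nat) := \row_i (z ord0 i + (if i == j then n%:Z else 0)) : 'rV[int]_d.
have ray_in n : linked z (ray n).
  elim: n => [|n IH].
    suff -> : ray 0%N = z by exact: rt_refl.
    by apply/rowP => i; rewrite mxE; case: ifP; rewrite addr0.
  apply: closed_z IH (unit_step_adj (j := j) _).
  by split => [i ij|]; rewrite !mxE ?(negbTE ij) ?eqxx //; lia.
have ray_inj : {in [set: nat] &, injective ray}.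
  move=> m n _ _ /(congr1 (fun r : 'rV[int]_d => r ord0 j)).
  by rewrite !mxE eqxx => /addrI [].
apply: infinite_nat; rewrite -(eq_finite_set (inj_card_eq ray_inj)).
by apply: sub_finite_set fin_z => _ [n _ <-].
Qed.

Lemma face_sub_boundary {z x y f} : linked z x -> ~ linked z y -> dual_adj d x y ->
  face_pts f = box x `&` box y -> face_pts f `<=` boundary R d (region z).
Proof.
move=> zx not_zy xy f_xy.
have open_f : omega f.
  apply/negPn/negP => /negbTE closed_f; apply: not_zy; apply: rt_trans zx _.
  by apply: rt_step; split => //; exists f.
move=> q fq; split; last by move=> /interior_subset [nKq _]; apply: nKq; exists f.
have xq : box x q by move: fq; rewrite f_xy => -[].
have qx : `|dual x - q| <= 1.
  apply: mx_norm_le_coords => // i; rewrite !mxE -div1r.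
  by have /andP[? ?] := xq i; rewrite ler_norml; apply/andP; split; lra.
move=> B /nbhs_ballP [e e0 eB].
pose t := Num.min 1 (e / 2).
have t01 : 0 < t <= 1 by rewrite lt_min ltr01 divr_gt0 //= ge_min lexx.
have te : t <= e / 2 by rewrite ge_min lexx orbT.
have r_open := segment_to_dual_pt_open xq t01.
exists (q + t *: (dual x - q)); split.
  split; first exact: open_box_notK r_open.
  by exists x; [move=> i; have /andP[? ?] := r_open i; apply/andP; split; lra|].
apply: eB; rewrite -ball_normE /= opprD addrA subrr sub0r normrN normrZ.
by move: t01 => /andP[t0 _]; rewrite gtr0_norm //; nra.
Qed.

Definition lower_box f : 'rV[int]_d :=
  \row_i (if i == f.2 then f.1 ord0 i - 1 else f.1 ord0 i).

Lemma lower_box_step f : unit_step f.2 (lower_box f) f.1.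
Proof. by split => [i ij|]; rewrite mxE ?(negbTE ij) ?eqxx ?subrK. Qed.

Lemma box_face_center {w f} : box w (face_center f) -> w = lower_box f \/ w = f.1.
Proof.
move=> wf; have w_off i : i != f.2 -> w ord0 i = f.1 ord0 i.
  move=> ij; have := wf i; rewrite mxE (negbTE ij) -div1r => /andP[? ?].
  by apply: (@intr_eq_of_lt1 R); rewrite ltr_norml; apply/andP; split; lra.
have := wf f.2; rewrite mxE eqxx => /andP[lo hi].
have : w ord0 f.2 <= f.1 ord0 f.2 by rewrite -(ler_int R).
have : f.1 ord0 f.2 <= w ord0 f.2 + 1 by rewrite -(ler_int R) intrD.
move=> {lo hi} lo hi.
have [e|e] : w ord0 f.2 = f.1 ord0 f.2 - 1 \/ w ord0 f.2 = f.1 ord0 f.2 by lia.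
- left; apply/rowP => i; rewrite mxE.
  by have [->|/w_off] := eqVneq i f.2.
- by right; apply/rowP => i; have [->|/w_off] := eqVneq i f.2.
Qed.

Lemma closure_region_face_center {z f} : closure (region z) (face_center f) ->
  linked z (lower_box f) \/ linked z f.1.
Proof.
move=> /(_ _ (near_cells_sub (face_center f))) [q [[_ [w wq zw]] [qf _]]].
by case: (box_face_center (qf w wq)) => <-; [left|right].
Qed.

Lemma edge_boundary_pair {C : set 'rV[int]_d} {x y} : dual_adj d x y -> C x -> ~ C y ->
  edge_boundary d C [set x; y].
Proof.
move=> xy Cx not_Cy; split; first by exists x, y.
by exists x, y; split=> //; split=> //; exact: dual_adj_neq.
Qed.

Lemma edge_boundaryP (C : set 'rV[int]_d) e : edge_boundary d C e ->
  exists x y, [/\ e = [set x; y], dual_adj d x y, C x & ~ C y].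
Proof.
move=> [[u [v [uv ->]]] [x [y [uv_xy [_ [Cx not_Cy]]]]]].
exists x, y; split => //.
by case: (set2_eq uv_xy (dual_adj_neq uv)) => -[-> ->] //; exact: dual_adj_sym.
Qed.

Lemma edge_boundary_meet {z z' x y} : dual_adj d x y -> linked z x -> linked z' y ->
  ~ linked z z' -> (edge_boundary d (cluster z) `&` edge_boundary d (cluster z')) [set x; y].
Proof.
move=> xy zx z'y not_zz'; split.
  by apply: edge_boundary_pair => // zy; apply: not_zz'; exact: rt_trans zy (linked_sym z'y).
rewrite setUC; apply: edge_boundary_pair (dual_adj_sym xy) z'y _ => z'x.
by apply: not_zz'; exact: rt_trans zx (linked_sym z'x).
Qed.

Lemma adjacent_regions_edge_boundary z z' : (0 < d)%N -> finite_set (cluster z) ->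
  adjacent_holes R d (region z) (region z') ->
  edge_boundary d (cluster z) `&` edge_boundary d (cluster z') !=set0.
Proof.
move=> d_gt0 fin_z [f [fz fz']].
have [zz'|not_zz'] := pselect (linked z z').
  rewrite -(cluster_linked zz') setIid.
  have [x [y [zx not_zy xy]]] := finite_cluster_exit d_gt0 fin_z.
  by exists [set x; y]; exact: edge_boundary_pair.
have step := unit_step_adj (lower_box_step f).
have not_both x : linked z x -> linked z' x -> False.
  by move=> zx z'x; apply: not_zz'; exact: rt_trans zx (linked_sym z'x).
case: (closure_region_face_center (fz _ (face_center_in f)).1) => zf;
case: (closure_region_face_center (fz' _ (face_center_in f)).1) => z'f.
- by case: (not_both _ zf z'f).
- by exists [set lower_box f; f.1]; exact: edge_boundary_meet.
- by exists [set f.1; lower_box f]; exact: edge_boundary_meet (dual_adj_sym step) zf z'f _.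
- by case: (not_both _ zf z'f).
Qed.

Lemma edge_boundary_adjacent_regions z z' :
  edge_boundary d (cluster z) `&` edge_boundary d (cluster z') !=set0 ->
  adjacent_holes R d (region z) (region z').
Proof.
move=> [_ [/edge_boundaryP [x [y [-> xy zx not_zy]]]]].
move=> /edge_boundaryP [x' [y' [e' _ z'x' not_z'y']]].
have [f f_xy] := dual_adj_face xy.
exists f; split; first exact: face_sub_boundary zx not_zy xy f_xy.
case: (set2_eq e' (dual_adj_neq xy)) => -[x'_eq y'_eq]; subst x' y'.
  exact: face_sub_boundary z'x' not_z'y' xy f_xy.
by apply: face_sub_boundary z'x' not_z'y' (dual_adj_sym xy) _; rewrite setIC.
Qed.

Lemma finite_cluster_hole z : finite_set (cluster z) -> hole R d omega (region z).
Proof.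
split; last exact: region_bounded.
by exists (dual z); split; [exact: dual_pt_notK|rewrite component_dual_pt].
Qed.

Lemma region_lattice_eq z x :
  region z `&` dual_lattice R d = dual @` cluster x -> region z = region x.
Proof.
move/region_lattice_cluster => xz; apply: region_linked.
by rewrite -[linked z x]/(cluster z x) -xz; exact: rt_refl.
Qed.

End Cells.

Theorem proposition3p1 (R : realType) (d : nat) (hd : (2 <= d)%N)
    (omega : config d) :
  (* each finite open dual cluster C determines a unique hole D with
     D cap (Z^d)^* = V(C) *)
  (forall C, finite_open_cluster R d omega C ->
     exists! D, hole R d omega D /\ D `&` dual_lattice R d = dual_pt R d @` C)
  /\
  (* the map C |-> D is onto the holes (injectivity is automatic since
     D cap (Z^d)^* determines C) *)
  (forall D, hole R d omega D ->
     exists C, finite_open_cluster R d omega C /\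
               D `&` dual_lattice R d = dual_pt R d @` C)
  /\
  (* adjacency of holes corresponds to Delta C cap Delta C' <> empty *)
  (forall C C' D D',
     finite_open_cluster R d omega C -> finite_open_cluster R d omega C' ->
     hole R d omega D -> hole R d omega D' ->
     D `&` dual_lattice R d = dual_pt R d @` C ->
     D' `&` dual_lattice R d = dual_pt R d @` C' ->
     (adjacent_holes R d D D' <->
        edge_boundary d C `&` edge_boundary d C' !=set0)).
Proof.
split; [|split].
- move=> _ [[x ->] fin_x]; exists (region R d omega x).
  split=> [|D [/hole_region [z ->] /region_lattice_eq //]].
  by split; [exact: finite_cluster_hole|exact: region_dual_lattice].
- move=> D /[dup] /hole_region [z ->] [_ /region_finite fin_z].
  exists (cluster R d omega z); split; last exact: region_dual_lattice.
  by split; first exists z.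
- move=> _ _ D D' [[x ->] fin_x] [[x' ->] _] /hole_region [z ->] /hole_region [z' ->].
  move=> /region_lattice_cluster zx /region_lattice_cluster ->; rewrite zx in fin_x *.
  split; last exact: edge_boundary_adjacent_regions.
  by apply: adjacent_regions_edge_boundary => //; apply: leq_trans hd.
Qed.
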